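(* The map $\Upsilon$ is a bijection from $\mathcal{F}$ to $\mathcal{C}^I$, with inverse given by $\Gamma$.
   Context: Fix $I\in\mathbb{N}$. $\mathcal{C}=\{f\in C(\mathbb{R}_+,\mathbb{R}_+):f(0)=0,f\text{ non-decreasing}\}$, $\mathcal{C}^\uparrow=\{f\in\mathcal{C}:f\text{ strictly increasing},\lim_{u\to\infty}f(u)=\infty\}$. For $\psi\in\mathcal{C}^I$, $\phi_i(u):=u-\sum_{j=1}^I2(i\wedge j)\psi_j(u)$; $\mathcal{F}:=\{\psi\in\mathcal{C}^I:\phi_I\in\mathcal{C}^\uparrow\}$; for $\psi\in\mathcal{F}$ each $\phi_i\in\mathcal{C}^\uparrow$ and $\Upsilon(\psi):=(\psi_i\circ\phi_i^{-1})_{i=1}^I$. For $\bar\psi\in\mathcal{C}^I$, $\gamma_I(z):=z$, $\gamma_i(z):=z+\sum_{j>i}2(j-i)\bar\psi_j(\gamma_j(z))$ for $i=I-1,\dots,0$ (each in $\mathcal{C}^\uparrow$), and $\Gamma(\bar\psi):=(\bar\psi_i\circ\gamma_i\circ\gamma_0^{-1})_{i=1}^I$. *)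

(* concrete reals R. Functions on R_+ are represented as
   R -> R; only their values on [0, +oo) matter. Indices i range over 1..I. *)
From Stdlib Require Import Reals Lra Lia ClassicalEpsilon.
Open Scope R_scope.

Fixpoint sum1 (n : nat) (f : nat -> R) : R :=
  match n with
  | O => 0
  | S m => sum1 m f + f (S m)
  end.

Definition cont_Rplus (f : R -> R) : Prop :=
  forall x, 0 <= x -> forall eps, 0 < eps ->
    exists delta, 0 < delta /\
      forall y, 0 <= y -> Rabs (y - x) < delta -> Rabs (f y - f x) < eps.

Definition inC (f : R -> R) : Prop :=
  cont_Rplus f /\ (forall x, 0 <= x -> 0 <= f x) /\ f 0 = 0 /\
  (forall x y, 0 <= x -> x <= y -> f x <= f y).

Definition inCup (f : R -> R) : Prop :=
  inC f /\ (forall x y, 0 <= x -> x < y -> f x < f y) /\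
  (forall M, exists N, forall u, N <= u -> M < f u).

Definition invR (f : R -> R) (u : R) : R :=
  epsilon (inhabits 0) (fun v => 0 <= v /\ f v = u).

(* families psi = (psi_1, ..., psi_I) are functions nat -> (R -> R),
   only the indices 1..I matter *)
Definition inCI (I : nat) (psi : nat -> R -> R) : Prop :=
  forall i, (1 <= i <= I)%nat -> inC (psi i).

Definition eqCI (I : nat) (p q : nat -> R -> R) : Prop :=
  forall i, (1 <= i <= I)%nat -> forall u, 0 <= u -> p i u = q i u.

Definition phi (I : nat) (psi : nat -> R -> R) (i : nat) (u : R) : R :=
  u - sum1 I (fun j => 2 * INR (Nat.min i j) * psi j u).

Definition inF (I : nat) (psi : nat -> R -> R) : Prop :=
  inCI I psi /\ inCup (phi I psi I).

Definition Upsilon (I : nat) (psi : nat -> R -> R) : nat -> R -> R :=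
  fun i u => psi i (invR (phi I psi i) u).

(* gamma_I(z) = z, gamma_i(z) = z + sum_{j=i+1}^I 2 (j - i) pb_j(gamma_j(z)),
   computed by downward recursion with fuel (fuel I - i suffices exactly;
   the sum for i = I is empty). *)
Fixpoint gamma_f (I : nat) (pb : nat -> R -> R) (fuel i : nat) (z : R) : R :=
  match fuel with
  | O => z
  | S n => z + sum1 I (fun j =>
             if Nat.ltb i j then 2 * INR (j - i) * pb j (gamma_f I pb n j z)
             else 0)
  end.

Definition gamma (I : nat) (pb : nat -> R -> R) (i : nat) (z : R) : R :=
  gamma_f I pb (I - i) i z.

Definition Gamma (I : nat) (pb : nat -> R -> R) : nat -> R -> R :=
  fun i z => pb i (gamma I pb i (invR (gamma I pb 0) z)).

From Stdlib Require Import Reals Lra Lia ClassicalEpsilon.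
Open Scope R_scope.

(* With [U_i c := sum_{j > i} 2 (j - i) c_j] and [S c := sum_j 2 j c_j], one has
   [phi_i = id - S psi + U_i psi], because [2 (i /\ j) + [i < j] 2 (j - i) = 2 j].
   Hence [phi_i = phi_I + U_i psi] and [gamma_i = id + U_i (pb o gamma)] obey the
   same descending recursion in i.  For psi in F this gives, by descending induction,
   [gamma_i (Upsilon psi) o phi_I = phi_i]; at i = 0 it says [gamma_0^{-1} = phi_I],
   and then [Gamma (Upsilon psi) = psi].  Conversely, for pb in C^I,
   [phi_i (Gamma pb) o gamma_0 = gamma_i], so [phi_I (Gamma pb) = gamma_0^{-1}] is in
   C^up and [Upsilon (Gamma pb) = pb].  Inverses of functions in C^up exist and stay in
   C^up by the intermediate value theorem. *)

Lemma sum1_ext n f g :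
  (forall j, (1 <= j <= n)%nat -> f j = g j) -> sum1 n f = sum1 n g.
Proof.
  induction n as [|n IH]; intros Hfg; simpl; [reflexivity|].
  rewrite IH, (Hfg (S n)); [reflexivity|lia|intros; apply Hfg; lia].
Qed.

Lemma sum1_add n f g : sum1 n (fun j => f j + g j) = sum1 n f + sum1 n g.
Proof. induction n as [|n IH]; simpl; [lra|rewrite IH; lra]. Qed.

Lemma sum1_0 n : sum1 n (fun _ => 0) = 0.
Proof. induction n as [|n IH]; simpl; [lra|rewrite IH; lra]. Qed.

Lemma cont_Rplus_const c : cont_Rplus (fun _ => c).
Proof.
  intros x _ eps Heps; exists 1; split; [lra|]; intros y _ _.
  rewrite Rminus_diag, Rabs_R0; exact Heps.
Qed.

Lemma cont_Rplus_id : cont_Rplus (fun u => u).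
Proof. intros x _ eps Heps; exists eps; split; auto. Qed.

Lemma cont_Rplus_add f g :
  cont_Rplus f -> cont_Rplus g -> cont_Rplus (fun u => f u + g u).
Proof.
  intros Hf Hg x Hx eps Heps.
  destruct (Hf x Hx (eps / 2)) as [d1 [Hd1 H1]]; [lra|].
  destruct (Hg x Hx (eps / 2)) as [d2 [Hd2 H2]]; [lra|].
  exists (Rmin d1 d2); split; [apply Rmin_pos; assumption|].
  intros y Hy Hyx.
  pose proof (H1 y Hy (Rlt_le_trans _ _ _ Hyx (Rmin_l _ _))) as A1.
  pose proof (H2 y Hy (Rlt_le_trans _ _ _ Hyx (Rmin_r _ _))) as A2.
  apply Rabs_def2 in A1; apply Rabs_def2 in A2; apply Rabs_def1; lra.
Qed.

Lemma cont_Rplus_scale c f : cont_Rplus f -> cont_Rplus (fun u => c * f u).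
Proof.
  intros Hf x Hx eps Heps.
  pose proof (Rabs_pos c) as Hc.
  destruct (Hf x Hx (eps / (Rabs c + 1))) as [d [Hd H]].
  { apply Rdiv_lt_0_compat; lra. }
  exists d; split; [exact Hd|]; intros y Hy Hyx.
  specialize (H y Hy Hyx).
  rewrite <- Rmult_minus_distr_l, Rabs_mult.
  apply Rmult_lt_compat_r with (r := Rabs c + 1) in H; [|lra].
  unfold Rdiv in H; rewrite Rmult_assoc, Rinv_l in H by lra.
  pose proof (Rabs_pos (f y - f x)); nra.
Qed.

Lemma cont_Rplus_comp f g :
  cont_Rplus f -> cont_Rplus g -> (forall x, 0 <= x -> 0 <= g x) ->
  cont_Rplus (fun u => f (g u)).
Proof.
  intros Hf Hg Hpos x Hx eps Heps.
  destruct (Hf (g x) (Hpos x Hx) eps Heps) as [d1 [Hd1 H1]].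
  destruct (Hg x Hx d1 Hd1) as [d2 [Hd2 H2]].
  exists d2; split; auto.
Qed.

Lemma cont_Rplus_ext f g :
  (forall u, 0 <= u -> f u = g u) -> cont_Rplus f -> cont_Rplus g.
Proof.
  intros Efg Hf x Hx eps Heps; destruct (Hf x Hx eps Heps) as [d [Hd H]].
  exists d; split; [exact Hd|]; intros y Hy Hyx; rewrite <- !Efg by assumption; auto.
Qed.

Lemma inC_0 : inC (fun _ => 0).
Proof. repeat split; intros; try lra; apply cont_Rplus_const. Qed.

Lemma inC_scale c f : 0 <= c -> inC f -> inC (fun u => c * f u).
Proof.
  intros Hc (Hf & Hpos & H0 & Hmono); repeat split.
  - apply cont_Rplus_scale, Hf.
  - intros x Hx; specialize (Hpos x Hx); nra.
  - rewrite H0; ring.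
  - intros x y Hx Hxy; specialize (Hmono x y Hx Hxy); nra.
Qed.

Lemma inC_add f g : inC f -> inC g -> inC (fun u => f u + g u).
Proof.
  intros (Hf & Hpos & H0 & Hmono) (Hg & Hpos' & H0' & Hmono'); repeat split.
  - apply cont_Rplus_add; assumption.
  - intros x Hx; specialize (Hpos x Hx); specialize (Hpos' x Hx); lra.
  - rewrite H0, H0'; ring.
  - intros x y Hx Hxy; specialize (Hmono x y Hx Hxy); specialize (Hmono' x y Hx Hxy); lra.
Qed.

Lemma inC_sum1 n F :
  (forall j, (1 <= j <= n)%nat -> inC (F j)) -> inC (fun u => sum1 n (fun j => F j u)).
Proof.
  induction n as [|n IH]; intros HF; simpl; [apply inC_0|].
  apply (inC_add (fun u => sum1 n (fun j => F j u)) (F (S n))).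
  - apply IH; intros; apply HF; lia.
  - apply HF; lia.
Qed.

Lemma inC_comp f g : inC f -> inC g -> inC (fun u => f (g u)).
Proof.
  intros (Hf & Hpos & H0 & Hmono) (Hg & Hpos' & H0' & Hmono'); repeat split.
  - apply cont_Rplus_comp; assumption.
  - intros; apply Hpos, Hpos'; assumption.
  - rewrite H0', H0; reflexivity.
  - intros; apply Hmono; auto.
Qed.

Lemma inC_ext f g : (forall u, 0 <= u -> f u = g u) -> inC f -> inC g.
Proof.
  intros Efg (Hf & Hpos & H0 & Hmono); repeat split.
  - exact (cont_Rplus_ext f g Efg Hf).
  - intros; rewrite <- Efg; auto.
  - rewrite <- Efg, H0 by lra; reflexivity.
  - intros; rewrite <- !Efg by lra; auto.
Qed.

Lemma inCup_lt f x y : inCup f -> 0 <= x -> x < y -> f x < f y.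
Proof. intros (_ & Hlt & _); apply Hlt. Qed.

Lemma inCup_le f x y : inCup f -> 0 <= x -> x <= y -> f x <= f y.
Proof. intros ((_ & _ & _ & Hle) & _); apply Hle. Qed.

Lemma inCup_ext f g : (forall u, 0 <= u -> f u = g u) -> inCup f -> inCup g.
Proof.
  intros Efg (Hf & Hlt & Hunb); split; [exact (inC_ext f g Efg Hf)|split].
  - intros x y Hx Hxy; rewrite <- !Efg by lra; auto.
  - intros M; destruct (Hunb M) as [N HN]; exists (Rmax N 0); intros u Hu.
    pose proof (Rmax_l N 0); pose proof (Rmax_r N 0).
    rewrite <- Efg by lra; apply HN; lra.
Qed.

Lemma inCup_id : inCup (fun u => u).
Proof.
  repeat split; intros; try lra; [apply cont_Rplus_id|].
  exists (M + 1); intros; lra.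
Qed.

Lemma inCup_add f g : inCup f -> inC g -> inCup (fun u => f u + g u).
Proof.
  intros (Hf & Hlt & Hunb) Hg; pose proof Hg as (_ & Hpos & _ & Hmono).
  split; [apply inC_add; assumption|split].
  - intros x y Hx Hxy; specialize (Hlt x y Hx Hxy).
    specialize (Hmono x y Hx (Rlt_le _ _ Hxy)); lra.
  - intros M; destruct (Hunb M) as [N HN]; exists (Rmax N 0); intros u Hu.
    pose proof (Rmax_l N 0); pose proof (Rmax_r N 0).
    specialize (HN u ltac:(lra)); specialize (Hpos u ltac:(lra)); lra.
Qed.

Lemma Rabs_Rmax0_le x y : Rabs (Rmax 0 y - Rmax 0 x) <= Rabs (y - x).
Proof.
  unfold Rmax; destruct (Rle_dec 0 y), (Rle_dec 0 x); unfold Rabs;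
    repeat destruct Rcase_abs; lra.
Qed.

(* Stdlib's IVT needs continuity on all of R, hence the extension [x |-> f (max 0 x)]. *)
Lemma inCup_surj f u : inCup f -> 0 <= u -> exists v, 0 <= v /\ f v = u.
Proof.
  intros ((Hc & _ & H0 & _) & _ & Hunb) Hu.
  destruct (Hunb u) as [N HN].
  set (b := Rmax N 1).
  assert (Hb1 : 1 <= b) by apply Rmax_r.
  assert (Hfb : u < f b) by (apply HN, Rmax_l).
  set (h := fun x => f (Rmax 0 x) - u).
  assert (Hh : continuity h).
  { intros x eps Heps; simpl; unfold R_dist.
    destruct (Hc (Rmax 0 x) (Rmax_l _ _) eps Heps) as [d [Hd H]].
    exists d; split; [exact Hd|]; intros y [_ Hy]; unfold h.
    replace (f (Rmax 0 y) - u - (f (Rmax 0 x) - u))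
      with (f (Rmax 0 y) - f (Rmax 0 x)) by ring.
    apply H; [apply Rmax_l|]; eapply Rle_lt_trans; [apply Rabs_Rmax0_le|exact Hy]. }
  destruct (IVT_cor h 0 b Hh ltac:(lra)) as [z [Hz Hhz]].
  { unfold h; rewrite Rmax_left, (Rmax_right 0 b), H0 by lra; nra. }
  exists z; split; [lra|].
  unfold h in Hhz; rewrite Rmax_right in Hhz by lra; lra.
Qed.

Lemma invR_spec f u : inCup f -> 0 <= u -> 0 <= invR f u /\ f (invR f u) = u.
Proof. intros Hf Hu; unfold invR; apply epsilon_spec, inCup_surj; assumption. Qed.

Lemma invR_unique f u v : inCup f -> 0 <= v -> f v = u -> invR f u = v.
Proof.
  intros Hf Hv Hfv.
  destruct (invR_spec f u Hf) as [Hw Hfw]; [rewrite <- Hfv; apply Hf; exact Hv|].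
  destruct (Rtotal_order (invR f u) v) as [Hlt|[Heq|Hgt]]; [|exact Heq|].
  - pose proof (inCup_lt f _ _ Hf Hw Hlt); lra.
  - pose proof (inCup_lt f _ _ Hf Hv Hgt); lra.
Qed.

Lemma lt_invR f a y : inCup f -> 0 <= a -> 0 <= y -> f a < y -> a < invR f y.
Proof.
  intros Hf Ha Hy Hay; destruct (invR_spec f y Hf Hy) as [Hv Hfv].
  destruct (Rlt_le_dec a (invR f y)) as [|Hle]; [assumption|].
  pose proof (inCup_le f _ _ Hf Hv Hle); lra.
Qed.

Lemma invR_lt f b y : inCup f -> 0 <= b -> 0 <= y -> y < f b -> invR f y < b.
Proof.
  intros Hf Hb Hy Hyb; destruct (invR_spec f y Hf Hy) as [Hv Hfv].
  destruct (Rlt_le_dec (invR f y) b) as [|Hle]; [assumption|].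
  pose proof (inCup_le f _ _ Hf Hb Hle); lra.
Qed.

Lemma cont_Rplus_invR f : inCup f -> cont_Rplus (invR f).
Proof.
  intros Hf u Hu eps Heps.
  destruct (invR_spec f u Hf Hu) as [Hv Hfv]; set (v := invR f u) in *.
  assert (Hup : u < f (v + eps))
    by (pose proof (inCup_lt f v (v + eps) Hf Hv ltac:(lra)); lra).
  assert (Hbelow : forall y, 0 <= y -> y < f (v + eps) -> invR f y - v < eps)
    by (intros y Hy Hyb; pose proof (invR_lt f (v + eps) y Hf ltac:(lra) Hy Hyb); lra).
  destruct (Rlt_le_dec (v - eps) 0) as [Hsmall|Hlarge].
  - exists (f (v + eps) - u); split; [lra|]; intros y Hy Hyu.
    apply Rabs_def2 in Hyu; pose proof (invR_spec f y Hf Hy) as [Hw _].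
    specialize (Hbelow y Hy ltac:(lra)); apply Rabs_def1; lra.
  - assert (Hlo : f (v - eps) < u)
      by (pose proof (inCup_lt f (v - eps) v Hf Hlarge ltac:(lra)); lra).
    exists (Rmin (f (v + eps) - u) (u - f (v - eps))); split; [apply Rmin_pos; lra|].
    intros y Hy Hyu; apply Rabs_def2 in Hyu.
    pose proof (Rmin_l (f (v + eps) - u) (u - f (v - eps))).
    pose proof (Rmin_r (f (v + eps) - u) (u - f (v - eps))).
    specialize (Hbelow y Hy ltac:(lra)).
    pose proof (lt_invR f (v - eps) y Hf Hlarge Hy ltac:(lra)); apply Rabs_def1; lra.
Qed.

Lemma inCup_invR f : inCup f -> inCup (invR f).
Proof.
  intros Hf; pose proof Hf as ((_ & Hpos & H0 & _) & _).
  assert (Hspec := fun u Hu => invR_spec f u Hf Hu).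
  repeat split.
  - apply cont_Rplus_invR, Hf.
  - intros u Hu; apply Hspec, Hu.
  - apply invR_unique; [exact Hf|lra|exact H0].
  - intros x y Hx Hxy; destruct (Hspec y ltac:(lra)) as [Hy Hfy].
    destruct (Rle_lt_dec (invR f x) (invR f y)) as [|Hlt]; [assumption|].
    destruct (Hspec x Hx) as [_ Hfx]; pose proof (inCup_lt f _ _ Hf Hy Hlt); lra.
  - intros x y Hx Hxy; destruct (Hspec y ltac:(lra)) as [Hy Hfy].
    destruct (Rlt_le_dec (invR f x) (invR f y)) as [|Hle]; [assumption|].
    destruct (Hspec x Hx) as [_ Hfx]; pose proof (inCup_le f _ _ Hf Hy Hle); lra.
  - intros M; set (a := Rmax M 0 + 1); exists (f a); intros u Hu.
    pose proof (Rmax_l M 0); pose proof (Rmax_r M 0).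
    assert (Hu0 : 0 <= u) by (pose proof (Hpos a ltac:(unfold a; lra)); lra).
    destruct (Hspec u Hu0) as [Hw Hfw].
    destruct (Rlt_le_dec (invR f u) a) as [Hlt|]; [|unfold a in *; lra].
    pose proof (inCup_lt f _ _ Hf Hw Hlt); lra.
Qed.

Definition upper_sum (I i : nat) (c : nat -> R) : R :=
  sum1 I (fun j => if Nat.ltb i j then 2 * INR (j - i) * c j else 0).

Section Families.
Variable I : nat.

Lemma upper_sum_ext i c d :
  (forall j, (i < j <= I)%nat -> c j = d j) -> upper_sum I i c = upper_sum I i d.
Proof.
  intros Ecd; apply sum1_ext; intros j Hj.
  destruct (Nat.ltb_spec i j); [rewrite Ecd by lia|]; reflexivity.
Qed.

Lemma upper_sum_ge i c : (I <= i)%nat -> upper_sum I i c = 0.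
Proof.
  intros Hi; rewrite <- (sum1_0 I); apply sum1_ext; intros j Hj.
  destruct (Nat.ltb_spec i j); [lia|reflexivity].
Qed.

Lemma inC_upper_sum i F :
  (forall j, (i < j <= I)%nat -> inC (F j)) ->
  inC (fun u => upper_sum I i (fun j => F j u)).
Proof.
  intros HF; apply (inC_sum1 I (fun j u => if Nat.ltb i j then 2 * INR (j - i) * F j u else 0)).
  intros j Hj; destruct (Nat.ltb_spec i j); [|apply inC_0].
  apply inC_scale; [pose proof (pos_INR (j - i)); lra|apply HF; lia].
Qed.

Lemma sum1_min_upper_sum i c :
  sum1 I (fun j => 2 * INR (Nat.min i j) * c j) + upper_sum I i c =
  sum1 I (fun j => 2 * INR j * c j).
Proof.
  unfold upper_sum; rewrite <- sum1_add; apply sum1_ext; intros j _.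
  destruct (Nat.ltb_spec i j).
  - rewrite Nat.min_l, minus_INR by lia; ring.
  - rewrite Nat.min_r by lia; ring.
Qed.

Lemma upper_sum_0 c : upper_sum I 0 c = sum1 I (fun j => 2 * INR j * c j).
Proof.
  rewrite <- (sum1_min_upper_sum 0), (sum1_ext _ _ (fun _ => 0)), sum1_0; [ring|].
  intros j _; simpl; ring.
Qed.

Lemma phi_upper_sum psi i u :
  phi I psi i u = u - sum1 I (fun j => 2 * INR j * psi j u) + upper_sum I i (fun j => psi j u).
Proof. unfold phi; rewrite <- (sum1_min_upper_sum i); ring. Qed.

Lemma phi_top psi i u :
  phi I psi i u = phi I psi I u + upper_sum I i (fun j => psi j u).
Proof. rewrite !phi_upper_sum, (upper_sum_ge I) by lia; ring. Qed.

Lemma phi_0 psi u : phi I psi 0 u = u.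
Proof. rewrite phi_upper_sum, upper_sum_0; ring. Qed.

Lemma inCup_phi psi i : inF I psi -> inCup (phi I psi i).
Proof.
  intros [Hpsi Htop].
  apply (inCup_ext (fun u => phi I psi I u + upper_sum I i (fun j => psi j u))).
  - intros u _; symmetry; apply phi_top.
  - apply inCup_add; [exact Htop|apply inC_upper_sum; intros; apply Hpsi; lia].
Qed.

Lemma downward_ind (P : nat -> Prop) :
  (forall i, (forall j, (i < j <= I)%nat -> P j) -> P i) -> forall i, P i.
Proof.
  intros Hstep.
  enough (H : forall k i, (I - i <= k)%nat -> P i) by (intros i; exact (H _ i (le_n _))).
  induction k as [|k IH]; intros i Hi; apply Hstep; intros j Hj; [lia|apply IH; lia].
Qed.

Section Gamma_recursion.
Variable pb : nat -> R -> R.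

Lemma gamma_f_S n i z :
  (I - i <= n)%nat -> gamma_f I pb (S n) i z = gamma_f I pb n i z.
Proof.
  revert i; induction n as [|n IH]; intros i Hi.
  - change (z + upper_sum I i (fun j => pb j (gamma_f I pb 0 j z)) = z).
    rewrite upper_sum_ge by lia; ring.
  - change (z + upper_sum I i (fun j => pb j (gamma_f I pb (S n) j z)) =
            z + upper_sum I i (fun j => pb j (gamma_f I pb n j z))).
    f_equal; apply upper_sum_ext; intros j Hj; rewrite IH by lia; reflexivity.
Qed.

Lemma gamma_f_enough_fuel n i z :
  (I - i <= n)%nat -> gamma_f I pb n i z = gamma I pb i z.
Proof.
  induction n as [|n IH]; intros Hi; unfold gamma.
  - replace (I - i)%nat with O by lia; reflexivity.
  - destruct (Nat.eq_dec (I - i) (S n)) as [->|Hne]; [reflexivity|].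
    rewrite gamma_f_S by lia; apply IH; lia.
Qed.

Lemma gamma_eq i z :
  gamma I pb i z = z + upper_sum I i (fun j => pb j (gamma I pb j z)).
Proof.
  unfold gamma at 1; destruct (I - i)%nat as [|n] eqn:Hi.
  - rewrite upper_sum_ge by lia; simpl; ring.
  - change (z + upper_sum I i (fun j => pb j (gamma_f I pb n j z)) =
            z + upper_sum I i (fun j => pb j (gamma I pb j z))).
    f_equal; apply upper_sum_ext; intros j Hj; rewrite gamma_f_enough_fuel by lia.
    reflexivity.
Qed.

Lemma gamma_top z : gamma I pb I z = z.
Proof. rewrite gamma_eq, upper_sum_ge; [ring|lia]. Qed.

Lemma inCup_gamma : inCI I pb -> forall i, inCup (gamma I pb i).
Proof.
  intros Hpb; apply downward_ind; intros i IH.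
  apply (inCup_ext (fun z => z + upper_sum I i (fun j => pb j (gamma I pb j z)))).
  - intros z _; symmetry; apply gamma_eq.
  - apply inCup_add; [exact inCup_id|]; apply inC_upper_sum; intros j Hj.
    apply (inC_comp (pb j) (gamma I pb j)); [apply Hpb; lia|exact (proj1 (IH j Hj))].
Qed.

End Gamma_recursion.

Lemma Upsilon_inCI psi : inF I psi -> inCI I (Upsilon I psi).
Proof.
  intros Hpsi i Hi; apply (inC_comp (psi i)); [apply Hpsi, Hi|].
  exact (proj1 (inCup_invR _ (inCup_phi psi i Hpsi))).
Qed.

Lemma Upsilon_phi psi i u :
  inF I psi -> 0 <= u -> Upsilon I psi i (phi I psi i u) = psi i u.
Proof.
  intros Hpsi Hu; unfold Upsilon; rewrite invR_unique with (v := u); auto.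
  apply inCup_phi, Hpsi.
Qed.

Lemma gamma_Upsilon psi i u :
  inF I psi -> 0 <= u -> gamma I (Upsilon I psi) i (phi I psi I u) = phi I psi i u.
Proof.
  intros Hpsi Hu; revert i; apply downward_ind; intros i IH.
  rewrite gamma_eq, (phi_top psi i); f_equal; apply upper_sum_ext; intros j Hj.
  rewrite IH, Upsilon_phi; auto.
Qed.

Lemma Gamma_Upsilon psi : inF I psi -> eqCI I (Gamma I (Upsilon I psi)) psi.
Proof.
  intros Hpsi i Hi z Hz; unfold Gamma.
  assert (Hgamma0 : invR (gamma I (Upsilon I psi) 0) z = phi I psi I z).
  { apply invR_unique.
    - apply inCup_gamma, Upsilon_inCI, Hpsi.
    - apply (inCup_phi psi I Hpsi), Hz.
    - rewrite gamma_Upsilon, phi_0 by assumption; reflexivity. }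
  rewrite Hgamma0, gamma_Upsilon, Upsilon_phi by assumption; reflexivity.
Qed.

Section Gamma_inverse.
Variable pb : nat -> R -> R.
Hypothesis Hpb : inCI I pb.

Lemma Gamma_gamma0 i z : 0 <= z -> Gamma I pb i (gamma I pb 0 z) = pb i (gamma I pb i z).
Proof.
  intros Hz; unfold Gamma; rewrite invR_unique with (v := z); auto.
  apply inCup_gamma, Hpb.
Qed.

Lemma phi_Gamma_gamma0 i z :
  0 <= z -> phi I (Gamma I pb) i (gamma I pb 0 z) = gamma I pb i z.
Proof.
  intros Hz.
  rewrite phi_upper_sum.
  rewrite (sum1_ext _ _ (fun j => 2 * INR j * pb j (gamma I pb j z)))
    by (intros; rewrite Gamma_gamma0 by assumption; reflexivity).
  rewrite (upper_sum_ext i _ (fun j => pb j (gamma I pb j z)))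
    by (intros; apply Gamma_gamma0, Hz).
  rewrite (gamma_eq pb 0), (gamma_eq pb i), upper_sum_0; ring.
Qed.

Lemma Gamma_inF : inF I (Gamma I pb).
Proof.
  split.
  - intros i Hi; apply (inC_comp (pb i)); [apply Hpb, Hi|].
    apply (inC_comp (gamma I pb i)).
    + exact (proj1 (inCup_gamma pb Hpb i)).
    + exact (proj1 (inCup_invR _ (inCup_gamma pb Hpb 0))).
  - apply (inCup_ext (invR (gamma I pb 0))); [|apply inCup_invR, inCup_gamma, Hpb].
    intros u Hu; destruct (invR_spec (gamma I pb 0) u (inCup_gamma pb Hpb 0) Hu) as [Hv Hgv].
    rewrite <- Hgv at 2; rewrite phi_Gamma_gamma0, gamma_top; auto.
Qed.

Lemma Upsilon_Gamma : eqCI I (Upsilon I (Gamma I pb)) pb.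
Proof.
  intros i Hi u Hu; unfold Upsilon.
  destruct (invR_spec (gamma I pb i) u (inCup_gamma pb Hpb i) Hu) as [Hv Hgv].
  set (v := invR (gamma I pb i) u) in *.
  rewrite invR_unique with (v := gamma I pb 0 v).
  - rewrite Gamma_gamma0, Hgv; auto.
  - apply inCup_phi, Gamma_inF.
  - apply (inCup_gamma pb Hpb 0), Hv.
  - rewrite phi_Gamma_gamma0; auto.
Qed.

End Gamma_inverse.
End Families.

Theorem proposition3p7 (I : nat) :
  (forall psi : nat -> R -> R, inF I psi ->
     inCI I (Upsilon I psi) /\ eqCI I (Gamma I (Upsilon I psi)) psi) /\
  (forall pb : nat -> R -> R, inCI I pb ->
     inF I (Gamma I pb) /\ eqCI I (Upsilon I (Gamma I pb)) pb).
Proof.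
  split; intros f Hf; split.
  - apply Upsilon_inCI, Hf.
  - apply Gamma_Upsilon, Hf.
  - apply Gamma_inF, Hf.
  - apply Upsilon_Gamma, Hf.
Qed.
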